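(* Let $R_1$ be a nonaxisymmetric rigid component in $\mathbb{R}^3$ ($n_r^1>1$), and let $R_2,R_3,R_4$ be rods ($n_r^2=n_r^3=n_r^4=1$), all in generic position. Suppose that: - $R_1$ intersects each of $R_2,R_3,R_4$ in one instance, containing the points $\mathbf p_1\in R_1\cap R_2$, $\mathbf p_2\in R_1\cap R_3$ and $\mathbf p_3\in R_1\cap R_4$ respectively; - $R_2$ intersects $R_3$ in one instance containing $\mathbf p_4$; - $R_3$ intersects $R_4$ in one instance containing $\mathbf p_5$. Then the composite body $R_1\cup R_2\cup R_3\cup R_4$ is rigid, unless $\mathbf p_1,\mathbf p_2,\mathbf p_3$ lie along one rod.
   Context: A rod is a straight segment in $\mathbb{R}^3$. A rigid component (rigid body) $R_i$ is a set of rods that moves as a single rigid body; $n_r^i$ denotes the number of rods it contains, and a component with $n_r^i=1$ is a rod. A component with $n_r^i>1$ is called nonaxisymmetric and may be planar or nonplanar. The intersection of two distinct components consists of connected pieces, called instances (contacts). Distinct components share no rod. Positions are generic apart from the stated incidences. A union of components is rigid if it is infinitesimally rigid in the following sense. An infinitesimal motion is admissible if its restriction to each component preserves, to first order, all distances between points of that component, and if points on a common rod (e.g. the three contact points on a rod) remain collinear, with fixed ratios along the rod, to first order. The union is rigid if every admissible infinitesimal motion is a Euclidean rigid motion of the whole union. Equivalently, the composite rigidity matrix has a right nullspace of dimension $6$. *)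

From HB Require Import structures.
From mathcomp Require Import all_boot all_order all_algebra.
From mathcomp Require Import reals.
Set Implicit Arguments. Unset Strict Implicit. Unset Printing Implicit Defensive.
Import Order.TTheory GRing.Theory Num.Theory.
Local Open Scope ring_scope.

Section RodDefs.
Variable R : realType.

Definition pt := 'rV[R]_3.

(* A rod: the straight segment between its two endpoints. *)
Definition rod := (pt * pt)%type.

Definition nondeg_rod (r : rod) : Prop := r.1 != r.2.

Definition on_rod (r : rod) (x : pt) : Prop :=
  exists t : R, 0 <= t <= 1 /\ x = (1 - t) *: r.1 + t *: r.2.

(* A rigid component is a list of rods; its point set is the union of the rods. *)
Definition component := seq rod.

Definition in_comp (C : component) (x : pt) : Prop :=
  exists r, r \in C /\ on_rod r x.

(* An infinitesimal Euclidean (rigid) motion: velocity field x |-> a + x W,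
   with W skew-symmetric (infinitesimal rotation) and a a translation. *)
Definition motion := (pt * 'M[R]_3)%type.

Definition euclidean (m : motion) : Prop := m.2^T = - m.2.

Definition vel (m : motion) (x : pt) : pt := m.1 + x *m m.2.

Definition admissible (B : seq component) (M : nat -> motion) : Prop :=
  (forall i, (i < size B)%N -> euclidean (M i)) /\
  (forall i j x, (i < size B)%N -> (j < size B)%N ->
     in_comp (nth [::] B i) x -> in_comp (nth [::] B j) x ->
     vel (M i) x = vel (M j) x).

Definition rigid (B : seq component) : Prop :=
  forall M, admissible B M ->
    exists m : motion, euclidean m /\
      forall i x, (i < size B)%N -> in_comp (nth [::] B i) x ->
        vel (M i) x = vel m x.

Definition collinear (x y z : pt) : Prop :=
  (\rank (col_mx (y - x) (z - x)) <= 1)%N.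

Definition coplanar (x y z w : pt) : Prop :=
  (\rank (col_mx (y - x) (col_mx (z - x) (w - x))) <= 2)%N.

Definition common_rod (rods : seq rod) (qs : seq pt) : Prop :=
  exists r, r \in rods /\ forall q, q \in qs -> on_rod r q.

(* Generic position of the contact points ps (relative to the rods):
   they are pairwise distinct, three of them are collinear only if they lie
   on a common rod, and four of them are coplanar only if three of them lie
   on a common rod (i.e. only the coincidences forced by the incidences). *)
Definition generic_contacts (rods : seq rod) (ps : seq pt) : Prop :=
  [/\ uniq ps,
      (forall x y z, x \in ps -> y \in ps -> z \in ps ->
         uniq [:: x; y; z] -> collinear x y z -> common_rod rods [:: x; y; z])
    & (forall x y z w, x \in ps -> y \in ps -> z \in ps -> w \in ps ->
         uniq [:: x; y; z; w] -> coplanar x y z w ->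
         exists a b c, [/\ a \in [:: x; y; z; w], b \in [:: x; y; z; w],
                         c \in [:: x; y; z; w] & uniq [:: a; b; c]] /\
                       common_rod rods [:: a; b; c])].

End RodDefs.

From HB Require Import structures.
From mathcomp Require Import all_boot all_order all_algebra.
From mathcomp Require Import reals ring.
Import Order.TTheory GRing.Theory Num.Theory.
Local Open Scope ring_scope.
Set Implicit Arguments. Unset Strict Implicit.

(* Measure all velocities relative to R1. A rod pinned at p then rotates
   infinitesimally about p, so the velocity of each of its points x is
   orthogonal to x - p. The velocity u of the joint p4 is orthogonal to p4 - p1
   (r2 is pinned at p1) and to p4 - p2 (r3 is pinned at p2). Along r3 the
   velocity of p5 is a nonzero multiple of u, and it is orthogonal to p5 - p3
   (r4 is pinned at p3). Hence u is orthogonal to p1 - p4, p5 - p4, p3 - p4,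
   which span R^3: each rod misses two of p4, p1, p5, p3, so by genericity these
   four points are not coplanar. Thus u = 0, every rod has two distinct points
   at rest, and therefore it is at rest relative to R1. *)

Lemma skew_quad_eq0 (R : numFieldType) n (W : 'M[R]_n) (v : 'rV[R]_n) :
  W^T = - W -> v *m W *m v^T = 0.
Proof.
move=> skW; set k := v *m W *m v^T.
have kT : k^T = k by rewrite [k]mx11_scalar tr_scalar_mx.
have kN : - k = k by rewrite -{2}kT /k !trmx_mul trmxK skW mulNmx mulmxN mulmxA.
apply/matrixP => i j; move/matrixP/(_ i j)/eqP: kN.
by rewrite mxE eqNr => /eqP ->; rewrite mxE.
Qed.

Lemma row_full_orthogonal_eq0 (F : fieldType) m n (A : 'M[F]_(m, n))
    (u : 'rV[F]_n) :
  row_full A -> u *m A^T = 0 -> u = 0.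
Proof.
move=> fullA uA0; apply: (row_free_inj (A := A^T)); last by rewrite mul0mx.
by rewrite /row_free mxrank_tr.
Qed.

Lemma uniq_subset_has_common (T : eqType) (s t u : seq T) :
  uniq t -> uniq u -> {subset t <= s} -> {subset u <= s} ->
  (size s < size t + size u)%N -> has (mem u) t.
Proof.
move=> tU uU ts us; apply: contraTT => /hasPn tu.
rewrite -leqNgt -size_cat uniq_leq_size // => [|x]; last first.
  by rewrite mem_cat => /orP[/ts | /us].
rewrite cat_uniq tU uU andbT; apply/hasPn => x ux.
by apply: contraL (ux) => /tu.
Qed.

Section Kinematics.
Variable R : realType.
Implicit Types (m : motion R) (r : rod R) (x y z : pt R).

Lemma velBr m x y : vel m x - vel m y = (x - y) *m m.2.
Proof. by rewrite /vel mulmxBl opprD addrACA subrr add0r. Qed.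

Lemma velBl m m' x : vel (m - m') x = vel m x - vel m' x.
Proof. by rewrite /vel mulmxBr opprD addrACA. Qed.

Lemma euclideanB m m' : euclidean m -> euclidean m' -> euclidean (m - m').
Proof. by rewrite /euclidean /= => eu eu'; rewrite linearB /= eu eu' opprD. Qed.

Lemma pinned_vel_orthogonal m x y :
  euclidean m -> vel m y = 0 -> vel m x *m (x - y)^T = 0.
Proof. by move=> eu vy; rewrite -[vel m x]subr0 -vy velBr skew_quad_eq0. Qed.

Lemma on_rod_collinear r x y z : on_rod r x -> on_rod r y -> on_rod r z -> y != z ->
  exists mu : R, x - y = mu *: (z - y).
Proof.
have rodB a b : (1 - a) *: r.1 + a *: r.2 - ((1 - b) *: r.1 + b *: r.2)
    = (a - b) *: (r.2 - r.1).
  by apply/rowP => i; rewrite !mxE; ring.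
move=> [a [_ ->]] [b [_ ->]] [c [_ ->]] yz.
have cb : c - b != 0 by apply: contraNneq yz => /eqP; rewrite subr_eq0 => /eqP ->.
by exists ((a - b) / (c - b)); rewrite !rodB scalerA divfK.
Qed.

Lemma velB_collinear m x y z (mu : R) : x - y = mu *: (z - y) ->
  vel m x - vel m y = mu *: (vel m z - vel m y).
Proof. by move=> xyz; rewrite !velBr xyz scalemxAl. Qed.

Lemma vel_rod_eq0 m r x y z : on_rod r x -> on_rod r y -> on_rod r z ->
  y != z -> vel m y = 0 -> vel m z = 0 -> vel m x = 0.
Proof.
move=> rx ry rz yz vy vz; have [mu /(velB_collinear m)] := on_rod_collinear rx ry rz yz.
by rewrite vy vz !subr0 scaler0.
Qed.

Lemma in_comp_rod r x : in_comp [:: r] x <-> on_rod r x.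
Proof.
split; first by move=> [r' []]; rewrite inE => /eqP ->.
by exists r; rewrite inE eqxx.
Qed.

Lemma rigid_of_rel_still (B : seq (component R)) : (0 < size B)%N ->
  (forall M, admissible B M -> forall i x, (i < size B)%N ->
     in_comp (nth [::] B i) x -> vel (M i - M 0%N) x = 0) ->
  rigid B.
Proof.
move=> B0 still M admM; exists (M 0%N); split; first exact: admM.1.
by move=> i x iB xi; apply/eqP; rewrite -subr_eq0 -velBl (still M).
Qed.

End Kinematics.

Arguments in_comp_rod {R r x}.

Section ChainOfThreeRods.
Variable R : realType.
Variables (r2 r3 r4 : rod R) (p1 p2 p3 p4 p5 : pt R) (m2 m3 m4 : motion R).
Hypotheses (eu2 : euclidean m2) (eu3 : euclidean m3) (eu4 : euclidean m4).
Hypotheses (r2p1 : on_rod r2 p1) (r2p4 : on_rod r2 p4).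
Hypotheses (r3p2 : on_rod r3 p2) (r3p4 : on_rod r3 p4) (r3p5 : on_rod r3 p5).
Hypotheses (r4p3 : on_rod r4 p3) (r4p5 : on_rod r4 p5).
Hypotheses (p14 : p1 != p4) (p24 : p2 != p4) (p25 : p2 != p5) (p35 : p3 != p5).
Hypotheses (pin1 : vel m2 p1 = 0) (pin2 : vel m3 p2 = 0) (pin3 : vel m4 p3 = 0).
Hypotheses (joint4 : vel m2 p4 = vel m3 p4) (joint5 : vel m3 p5 = vel m4 p5).
Hypothesis noncop : ~ coplanar p4 p1 p5 p3.

Lemma joint_vel_eq0 : vel m3 p4 = 0.
Proof.
set u := vel m3 p4.
have [lam p5E] := on_rod_collinear r3p5 r3p2 r3p4 p24.
have v5E : vel m3 p5 = lam *: u.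
  by have := velB_collinear m3 p5E; rewrite pin2 !subr0.
have lam0 : lam != 0.
  by apply: contraNneq p25 => lam0; move/eqP: p5E; rewrite lam0 scale0r subr_eq0 eq_sym.
have u41 : u *m (p1 - p4)^T = 0.
  by rewrite -opprB linearN mulmxN /u -joint4 pinned_vel_orthogonal ?oppr0.
have u45 : u *m (p5 - p4)^T = 0.
  have -> : p5 - p4 = (lam - 1) *: (p4 - p2).
    by rewrite scalerBl scale1r -p5E; apply/rowP => i; rewrite !mxE; ring.
  by rewrite linearZ -scalemxAr pinned_vel_orthogonal ?scaler0.
have u35 : u *m (p5 - p3)^T = 0.
  have : lam *: (u *m (p5 - p3)^T) = 0.
    by rewrite scalemxAl -v5E joint5 pinned_vel_orthogonal.
  by move/eqP; rewrite scaler_eq0 (negbTE lam0) => /eqP.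
have u34 : u *m (p3 - p4)^T = 0.
  have -> : p3 - p4 = (p5 - p4) - (p5 - p3) by apply/rowP => i; rewrite !mxE; ring.
  by rewrite linearB mulmxBr u45 u35 subr0.
apply: (row_full_orthogonal_eq0 (A := col_mx (p1 - p4) (col_mx (p5 - p4) (p3 - p4)))).
  by rewrite /row_full eqn_leq rank_leq_col ltnNge; apply/negP.
by rewrite !tr_col_mx !mul_mx_row u41 u45 u34 !row_mx0.
Qed.

Lemma chain_rods_still :
  [/\ forall x, on_rod r2 x -> vel m2 x = 0,
      forall x, on_rod r3 x -> vel m3 x = 0
    & forall x, on_rod r4 x -> vel m4 x = 0].
Proof.
have v4 := joint_vel_eq0.
split=> x rx.
- by apply: (vel_rod_eq0 rx r2p1 r2p4 p14 pin1); rewrite joint4.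
- exact: (vel_rod_eq0 rx r3p2 r3p4 p24 pin2 v4).
- apply: (vel_rod_eq0 rx r4p3 r4p5 p35 pin3).
  by rewrite -joint5 (vel_rod_eq0 r3p5 r3p2 r3p4 p24 pin2 v4).
Qed.

End ChainOfThreeRods.

Section Contacts.
Variable R : realType.
Variables (R1 : component R) (r2 r3 r4 : rod R) (p1 p2 p3 p4 p5 : pt R).
Hypothesis c12 : forall x, in_comp R1 x /\ on_rod r2 x <-> x = p1.
Hypothesis c13 : forall x, in_comp R1 x /\ on_rod r3 x <-> x = p2.
Hypothesis c14 : forall x, in_comp R1 x /\ on_rod r4 x <-> x = p3.
Hypothesis c23 : forall x, on_rod r2 x /\ on_rod r3 x <-> x = p4.
Hypothesis c34 : forall x, on_rod r3 x /\ on_rod r4 x <-> x = p5.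
Hypotheses (p12 : p1 != p2) (p13 : p1 != p3) (p14 : p1 != p4) (p15 : p1 != p5).
Hypotheses (p23 : p2 != p3) (p24 : p2 != p4) (p25 : p2 != p5).
Hypotheses (p34 : p3 != p4) (p35 : p3 != p5) (p45 : p4 != p5).

Lemma rod_misses_two r : r \in R1 ++ [:: r2; r3; r4] ->
  exists q1 q2, [/\ uniq [:: q1; q2], {subset [:: q1; q2] <= [:: p4; p1; p5; p3]}
                 & forall q, q \in [:: q1; q2] -> ~ on_rod r q].
Proof.
have [R1p1 _] := (c12 p1).2 erefl; have [R1p3 _] := (c14 p3).2 erefl.
have [r2p4 r3p4] := (c23 p4).2 erefl; have [r3p5 r4p5] := (c34 p5).2 erefl.
have miss q1 q2 : q1 != q2 -> q1 \in [:: p4; p1; p5; p3] -> q2 \in [:: p4; p1; p5; p3] ->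
    ~ on_rod r q1 -> ~ on_rod r q2 ->
    exists q1 q2, [/\ uniq [:: q1; q2], {subset [:: q1; q2] <= [:: p4; p1; p5; p3]}
                   & forall q, q \in [:: q1; q2] -> ~ on_rod r q].
  move=> q12 q1s q2s rq1 rq2; exists q1, q2; split; first by rewrite /= inE q12.
    by apply/allP; rewrite /= q1s q2s.
  by move=> q; rewrite !inE => /orP[] /eqP ->; [exact: rq1 | exact: rq2].
move=> rB; rewrite mem_cat !inE in rB; case/orP: rB => [rR1 | /or3P[] /eqP rE]; try subst r.
- have R1r q : on_rod r q -> in_comp R1 q by exists r.
  apply: (miss p4 p5); rewrite ?inE ?eqxx ?orbT // => /R1r h.
  + by move: p14; rewrite ((c12 p4).1 (conj h r2p4)) eqxx.
  + by move: p25; rewrite ((c13 p5).1 (conj h r3p5)) eqxx.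
- apply: (miss p3 p5); rewrite ?inE ?eqxx ?orbT // => h.
  + by move: p13; rewrite ((c12 p3).1 (conj R1p3 h)) eqxx.
  + by move: p45; rewrite ((c23 p5).1 (conj h r3p5)) eqxx.
- apply: (miss p1 p3); rewrite ?inE ?eqxx ?orbT // => h.
  + by move: p12; rewrite ((c13 p1).1 (conj R1p1 h)) eqxx.
  + by move: p23; rewrite ((c13 p3).1 (conj R1p3 h)) eqxx.
- apply: (miss p1 p4); rewrite ?inE ?eqxx ?orbT // => h.
  + by move: p13; rewrite ((c14 p1).1 (conj R1p1 h)) eqxx.
  + by move: p45; rewrite ((c34 p4).1 (conj r3p4 h)) eqxx.
Qed.

Lemma contacts_noncoplanar :
  generic_contacts (R1 ++ [:: r2; r3; r4]) [:: p1; p2; p3; p4; p5] ->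
  ~ coplanar p4 p1 p5 p3.
Proof.
move=> [_ _ gcop] cop.
have s4 : uniq [:: p4; p1; p5; p3].
  rewrite /= !inE !negb_or (eq_sym p4 p1) (eq_sym p4 p3) (eq_sym p5 p3).
  by rewrite p14 p45 p34 p15 p13 p35.
have [m4 m1 m5 m3] : [/\ p4 \in [:: p1; p2; p3; p4; p5], p1 \in [:: p1; p2; p3; p4; p5],
                          p5 \in [:: p1; p2; p3; p4; p5] & p3 \in [:: p1; p2; p3; p4; p5]].
  by rewrite !inE !eqxx !orbT.
have [a [b [c [[ha hb hc abc] [r [rB rabc]]]]]] := gcop _ _ _ _ m4 m1 m5 m3 s4 cop.
have [q1 [q2 [q12 qs qr]]] := rod_misses_two rB.
have abcs : {subset [:: a; b; c] <= [:: p4; p1; p5; p3]} by apply/allP; rewrite /= ha hb hc.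
have /hasP[q qabc qq] := uniq_subset_has_common abc q12 abcs qs isT.
exact: qr q qq (rabc q qabc).
Qed.

Lemma admissible_rods_still M : ~ coplanar p4 p1 p5 p3 ->
  admissible [:: R1; [:: r2]; [:: r3]; [:: r4]] M ->
  [/\ forall x, on_rod r2 x -> vel (M 1%N - M 0%N) x = 0,
      forall x, on_rod r3 x -> vel (M 2%N - M 0%N) x = 0
    & forall x, on_rod r4 x -> vel (M 3%N - M 0%N) x = 0].
Proof.
move=> noncop [euM admM]; pose m i := M i - M 0%N.
have [R1p1 r2p1] := (c12 p1).2 erefl; have [R1p2 r3p2] := (c13 p2).2 erefl.
have [R1p3 r4p3] := (c14 p3).2 erefl.
have [r2p4 r3p4] := (c23 p4).2 erefl; have [r3p5 r4p5] := (c34 p5).2 erefl.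
have eu i : (i < 4)%N -> euclidean (m i) by move=> i4; apply: euclideanB; apply: euM.
have joint i j x : (i < 4)%N -> (j < 4)%N ->
    in_comp (nth [::] [:: R1; [:: r2]; [:: r3]; [:: r4]] i) x ->
    in_comp (nth [::] [:: R1; [:: r2]; [:: r3]; [:: r4]] j) x -> vel (m i) x = vel (m j) x.
  by move=> i4 j4 xi xj; rewrite !velBl (admM i j x).
have pinned j p : (0 < j < 4)%N ->
    in_comp (nth [::] [:: R1; [:: r2]; [:: r3]; [:: r4]] j) p -> in_comp R1 p ->
    vel (m j) p = 0.
  by case/andP=> j0 j4 pj pR1; rewrite (joint j 0%N p) // /m velBl subrr.
exact: (chain_rods_still (eu 1%N isT) (eu 2%N isT) (eu 3%N isT)
  r2p1 r2p4 r3p2 r3p4 r3p5 r4p3 r4p5 p14 p24 p25 p35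
  (pinned 1%N p1 isT (in_comp_rod.2 r2p1) R1p1)
  (pinned 2%N p2 isT (in_comp_rod.2 r3p2) R1p2)
  (pinned 3%N p3 isT (in_comp_rod.2 r4p3) R1p3)
  (joint 1%N 2%N p4 isT isT (in_comp_rod.2 r2p4) (in_comp_rod.2 r3p4))
  (joint 2%N 3%N p5 isT isT (in_comp_rod.2 r3p5) (in_comp_rod.2 r4p5)) noncop).
Qed.

End Contacts.

Theorem mainTheorem3 (R : realType) (R1 : component R) (r2 r3 r4 : rod R)
    (p1 p2 p3 p4 p5 : pt R) :
  (* R1 is nonaxisymmetric: it contains more than one rod *)
  (1 < size R1)%N ->
  (* all rods are nondegenerate segments *)
  (forall r, r \in R1 -> nondeg_rod r) ->
  nondeg_rod r2 -> nondeg_rod r3 -> nondeg_rod r4 ->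
  (* distinct components share no rod *)
  r2 \notin R1 -> r3 \notin R1 -> r4 \notin R1 ->
  r2 != r3 -> r2 != r4 -> r3 != r4 ->
  (* the contacts: each listed intersection is a single instance (a point) *)
  (forall x, in_comp R1 x /\ on_rod r2 x <-> x = p1) ->
  (forall x, in_comp R1 x /\ on_rod r3 x <-> x = p2) ->
  (forall x, in_comp R1 x /\ on_rod r4 x <-> x = p3) ->
  (forall x, on_rod r2 x /\ on_rod r3 x <-> x = p4) ->
  (forall x, on_rod r3 x /\ on_rod r4 x <-> x = p5) ->
  (* generic position apart from the stated incidences *)
  generic_contacts (R1 ++ [:: r2; r3; r4]) [:: p1; p2; p3; p4; p5] ->
  (* p1, p2, p3 do not lie along one rod *)
  ~ (exists r, r \in R1 /\ on_rod r p1 /\ on_rod r p2 /\ on_rod r p3) ->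
  rigid [:: R1; [:: r2]; [:: r3]; [:: r4]].
Proof.
(* The last hypothesis is implied by [generic_contacts]: were p1, p2, p3 on one
   rod, the plane through that rod and p4 would contain r3, hence p5. *)
move=> _ _ _ _ _ _ _ _ _ _ _ c12 c13 c14 c23 c34 gen _.
have [/and5P[u1 u2 u3 p45 _] _ _] := gen; rewrite !inE !negb_or in u1 u2 u3 p45.
case/and4P: u1 => p12 p13 p14 p15; case/and3P: u2 => p23 p24 p25.
case/andP: u3 => p34 p35.
have noncop := contacts_noncoplanar c12 c13 c14 c23 c34
  p12 p13 p14 p15 p23 p25 p34 p35 p45 gen.
apply: rigid_of_rel_still => // M admM.
have [still2 still3 still4] :=
  admissible_rods_still c12 c13 c14 c23 c34 p14 p24 p25 p35 noncop admM.
case=> [|[|[|[|i]]]] x //= _; rewrite ?in_comp_rod.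
- by rewrite velBl subrr.
- exact: still2.
- exact: still3.
- exact: still4.
Qed.
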